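(* Let $\Phi$ be irreducible with highest root $\gamma$ and $\mathfrak h_\gamma=\Phi^+\setminus\{\gamma\}$. Let $v,w\in W$ with $v>w$ in Bruhat order. Then $\ell_\gamma(w)=\ell_\gamma(v)$ if and only if all of the following hold: $v$ is a cover of $w$; $N_w=N^\gamma_w$; and there exists $\beta\in N_v$ with $v^{-1}\beta=-\gamma$.
   Context: $\Phi$ is a crystallographic root system in a real Euclidean space with base $\Delta$, positive roots $\Phi^+$, $\Phi^-=-\Phi^+$, Weyl group $W$ with length $\ell$; $s_\alpha$ is the reflection through $\alpha$. $\Phi$ irreducible means it is not a disjoint union of two root systems; then there is a unique highest root $\gamma\in\Phi^+$ with $\alpha\prec\gamma$ for all $\alpha\in\Phi$, where $\alpha\prec\beta$ means $\beta-\alpha$ is a sum of positive roots. For $w\in W$, $N_w=\{\beta\in\Phi^+: w^{-1}\beta\in\Phi^-\}$, $N^\gamma_w=\{\beta\in\Phi^+: w^{-1}\beta\in-\mathfrak h_\gamma\}$, and $\ell_\gamma(w)=|N^\gamma_w|$. The Bruhat graph has vertex set $W$ and edges $u\to s_\alpha u$ for $\alpha\in\Phi^+$ with $(s_\alpha u)^{-1}\alpha\in\Phi^-$; Bruhat order $<$ is the transitive closure. $v$ is a cover of $w$ if $v=s_\alpha w$ with $w\to v$ a Bruhat graph edge and $\ell(v)=\ell(w)+1$. *)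

From HB Require Import structures.
From mathcomp Require Import all_boot all_order all_algebra.
From mathcomp Require Import reals.
From Stdlib Require Import ClassicalDescription Relation_Operators.
Set Implicit Arguments. Unset Strict Implicit. Unset Printing Implicit Defensive.
Import Order.TTheory GRing.Theory Num.Theory.
Local Open Scope ring_scope.

Definition pb (P : Prop) : bool :=
  if excluded_middle_informative P then true else false.

Section RootSystems.
Variables (R : realType) (n : nat).
Notation V := 'cV[R]_n.

Definition dot (u v : V) : R := (u^T *m v) 0 0.

(* the reflection s_alpha as a matrix: s_alpha x = x - 2(x,a)/(a,a) a *)
Definition refl (a : V) : 'M[R]_n :=
  1%:M - (2 / dot a a) *: (a *m a^T).

Definition root_system (Phi : seq V) : Prop :=
  [/\ uniq Phi /\ 0 \notin Phi,
      (forall x : V, exists c : nat -> R,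
          x = \sum_(i < size Phi) c i *: Phi`_i),
      (forall a, a \in Phi -> forall c : R, c *: a \in Phi -> c = 1 \/ c = -1),
      (forall a b, a \in Phi -> b \in Phi -> refl a *m b \in Phi) &
      (forall a b, a \in Phi -> b \in Phi ->
          exists z : int, 2 * dot b a / dot a a = z%:~R)].

Definition irreducible_rs (Phi : seq V) : Prop :=
  Phi != [::] /\
  forall P : pred V,
    (forall a b, a \in Phi -> b \in Phi -> P a -> ~~ P b -> dot a b = 0) ->
    (all P Phi \/ all (predC P) Phi).

Definition nonneg_comb (Delta : seq V) (x : V) : Prop :=
  exists c : nat -> nat, x = \sum_(i < size Delta) (c i)%:R *: Delta`_i.

Definition is_base (Phi Delta : seq V) : Prop :=
  [/\ {subset Delta <= Phi},
      (forall c : nat -> R, \sum_(i < size Delta) c i *: Delta`_i = 0 ->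
          forall i, (i < size Delta)%N -> c i = 0) &
      (forall b, b \in Phi -> nonneg_comb Delta b \/ nonneg_comb Delta (- b))].

Definition posroot (Phi Delta : seq V) (x : V) : Prop :=
  x \in Phi /\ nonneg_comb Delta x.
Definition negroot (Phi Delta : seq V) (x : V) : Prop :=
  posroot Phi Delta (- x).

Definition prec (Phi Delta : seq V) (a b : V) : Prop :=
  exists s : seq V, (forall x, x \in s -> posroot Phi Delta x) /\
                    b - a = \sum_(x <- s) x.

Definition highest_root (Phi Delta : seq V) (g : V) : Prop :=
  posroot Phi Delta g /\ forall a, a \in Phi -> prec Phi Delta a g.

Inductive in_W (Phi : seq V) : 'M[R]_n -> Prop :=
| W_one : in_W Phi 1%:M
| W_refl a M : a \in Phi -> in_W Phi M -> in_W Phi (refl a *m M).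

Definition simple_word (Delta : seq V) (w : 'M[R]_n) (k : nat) : Prop :=
  exists s : seq V, [/\ size s = k, {subset s <= Delta} &
                        w = foldr (fun a M => refl a *m M) 1%:M s].

Definition cox_length (Delta : seq V) (w : 'M[R]_n) (k : nat) : Prop :=
  simple_word Delta w k /\ forall k', simple_word Delta w k' -> (k <= k')%N.

Definition N_set (Phi Delta : seq V) (w : 'M[R]_n) (b : V) : Prop :=
  posroot Phi Delta b /\ negroot Phi Delta (invmx w *m b).

Definition neg_hg (Phi Delta : seq V) (g x : V) : Prop :=
  posroot Phi Delta (- x) /\ - x != g.

Definition Ng_set (Phi Delta : seq V) (g : V) (w : 'M[R]_n) (b : V) : Prop :=
  posroot Phi Delta b /\ neg_hg Phi Delta g (invmx w *m b).

Definition ell_g (Phi Delta : seq V) (g : V) (w : 'M[R]_n) : nat :=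
  count (fun b => pb (Ng_set Phi Delta g w b)) Phi.

Definition bruhat_edge (Phi Delta : seq V) (u v : 'M[R]_n) : Prop :=
  exists a, [/\ posroot Phi Delta a, v = refl a *m u &
                negroot Phi Delta (invmx v *m a)].

Definition bruhat_lt (Phi Delta : seq V) (w v : 'M[R]_n) : Prop :=
  in_W Phi w /\ clos_trans _ (bruhat_edge Phi Delta) w v.

Definition is_cover (Phi Delta : seq V) (w v : 'M[R]_n) : Prop :=
  bruhat_edge Phi Delta w v /\
  exists k, cox_length Delta w k /\ cox_length Delta v k.+1.

End RootSystems.

(* For w in W the Coxeter length l(w) equals |N_w|: a simple reflection
   changes N_w only at its own root, and a word longer than |N_w| shortens by
   strong exchange.  Along an edge u -> s_a u of the Bruhat graph, b |-> s_a b
   (when s_a b is positive, else b) injects N_u into N_(s_a u) minus {a}, so l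
   grows strictly along Bruhat paths.  Since N^gamma_w = N_w minus {-w gamma},
   l_gamma(w) = l(w) - [-w gamma in N_w].  Hence, for w < v, the equality
   l_gamma(w) = l_gamma(v) forces l(v) = l(w) + 1, so the path is a single edge
   (a cover), with -w gamma not in N_w and -v gamma in N_v; the converse is
   immediate. *)

From HB Require Import structures.
From mathcomp Require Import all_boot all_order all_algebra.
From mathcomp Require Import reals.
From mathcomp Require Import ring lra zify.
From Stdlib Require Import ClassicalDescription Relation_Operators Operators_Properties.
Set Implicit Arguments. Unset Strict Implicit. Unset Printing Implicit Defensive.
Import Order.TTheory GRing.Theory Num.Theory.
Local Open Scope ring_scope.

Section Reflections.
Variables (R : realType) (n : nat).
Notation V := 'cV[R]_n.

Lemma dotC (u v : V) : dot u v = dot v u.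
Proof. by rewrite /dot -{1}(trmxK v) -trmx_mul mxE. Qed.

Lemma dotDl (u v x : V) : dot (u + v) x = dot u x + dot v x.
Proof. by rewrite /dot linearD /= mulmxDl mxE. Qed.

Lemma dotZl (c : R) (u x : V) : dot (c *: u) x = c * dot u x.
Proof. by rewrite /dot linearZ /= -scalemxAl mxE. Qed.

Lemma dotNl (u x : V) : dot (- u) x = - dot u x.
Proof. by rewrite -scaleN1r dotZl mulN1r. Qed.

Lemma dot_suml I (r : seq I) (P : pred I) (F : I -> V) x :
  dot (\sum_(i <- r | P i) F i) x = \sum_(i <- r | P i) dot (F i) x.
Proof.
elim/big_rec2: _ => [|i y1 y2 _ <-]; last by rewrite dotDl.
by rewrite /dot linear0 mul0mx mxE.
Qed.

Lemma dot_eq0 (u : V) : (dot u u == 0) = (u == 0).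
Proof.
apply/idP/eqP => [|->]; last by rewrite /dot mulmx0 mxE.
rewrite /dot mxE psumr_eq0 => [/allP u0|i _]; last by rewrite mxE sqr_ge0.
apply/matrixP => i j; rewrite (ord1 j) !mxE.
by have /(_ (mem_index_enum i)) := u0 i; rewrite mxE mulf_eq0 orbb => /eqP.
Qed.

Lemma dot_gt0 (u : V) : u != 0 -> 0 < dot u u.
Proof.
move=> u0; rewrite lt_def dot_eq0 u0 /dot mxE.
by apply: sumr_ge0 => i _; rewrite mxE sqr_ge0.
Qed.

Lemma mul_refl (a x : V) : refl a *m x = x - (2 / dot a a * dot a x) *: a.
Proof.
rewrite /refl mulmxBl mul1mx -scalemxAl -mulmxA [a^T *m x]mx11_scalar.
by rewrite mul_mx_scalar scalerA.
Qed.

Lemma tr_refl (a : V) : (refl a)^T = refl a.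
Proof. by rewrite /refl linearB /= trmx1 linearZ /= trmx_mul trmxK. Qed.

Lemma reflN (a : V) : refl (- a) = refl a.
Proof.
by rewrite /refl dotNl dotC dotNl opprK linearN /= mulNmx mulmxN opprK.
Qed.

Lemma refl_self (a : V) : a != 0 -> refl a *m a = - a.
Proof.
move=> a0; rewrite mul_refl mulrAC -mulrA divff ?dot_eq0 // mulr1.
by rewrite scaler_nat mulr2n opprD addrA subrr sub0r.
Qed.

Lemma reflK (a : V) : a != 0 -> refl a *m refl a = 1%:M.
Proof.
move=> a0; have aa0 : dot a a != 0 by rewrite dot_eq0.
have aaT2 : (a *m a^T) *m (a *m a^T) = dot a a *: (a *m a^T).
  by rewrite mulmxA -(mulmxA a) [a^T *m a]mx11_scalar mul_mx_scalar -scalemxAl.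
rewrite /refl mulmxBl mul1mx mulmxBr mulmx1 -scalemxAl -scalemxAr aaT2 !scalerA.
have -> : 2 / dot a a * (2 / dot a a) * dot a a = 2 / dot a a + 2 / dot a a.
  by field.
by rewrite scalerDl opprB addrK subrK.
Qed.

Lemma mul_reflK (a x : V) : a != 0 -> refl a *m (refl a *m x) = x.
Proof. by move=> a0; rewrite mulmxA reflK // mul1mx. Qed.

Definition orthomx (w : 'M[R]_n) := w^T *m w = 1%:M.

Lemma orthomx_refl (a : V) : a != 0 -> orthomx (refl a).
Proof. by move=> a0; rewrite /orthomx tr_refl reflK. Qed.

Lemma orthomxM (u w : 'M[R]_n) : orthomx u -> orthomx w -> orthomx (u *m w).
Proof.
by move=> ou ow; rewrite /orthomx trmx_mul mulmxA -(mulmxA w^T) ou mulmx1.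
Qed.

Lemma orthomx_trV (w : 'M[R]_n) : orthomx w -> w *m w^T = 1%:M.
Proof. exact: mulmx1C. Qed.

Lemma orthomx_inv (w : 'M[R]_n) : orthomx w -> invmx w = w^T.
Proof.
move=> ow; have [/mulmxV wV _] := mulmx1_unit (orthomx_trV ow).
by rewrite -[RHS]mulmx1 -wV mulmxA ow mul1mx.
Qed.

Lemma dot_orthomx (w : 'M[R]_n) (x y : V) :
  orthomx w -> dot (w *m x) (w *m y) = dot x y.
Proof. by rewrite /dot trmx_mul mulmxA -(mulmxA x^T) => ->; rewrite mulmx1. Qed.

Lemma refl_conj (w : 'M[R]_n) (a : V) : orthomx w ->
  w *m refl a *m w^T = refl (w *m a).
Proof.
move=> ow; rewrite /refl mulmxBr mulmx1 mulmxBl orthomx_trV //.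
by rewrite -scalemxAr -scalemxAl dot_orthomx // !mulmxA trmx_mul mulmxA.
Qed.

End Reflections.

Lemma pbP (P : Prop) : reflect P (pb P).
Proof. by rewrite /pb; case: excluded_middle_informative => H; constructor. Qed.

Lemma pb_eq (P Q : Prop) : (P <-> Q) -> pb P = pb Q.
Proof. by move=> [PQ QP]; apply/pbP/pbP. Qed.

Section Counting.
Variables (T : eqType) (s : seq T).
Hypothesis s_uniq : uniq s.

Lemma count_eq_off1 (a : T) (P Q : pred T) : a \in s ->
  {in s, forall x, x != a -> P x = Q x} ->
  (count P s + Q a = count Q s + P a)%N.
Proof.
elim: s s_uniq => //= x t IH /andP[xt ut]; rewrite inE => at' PQ.
have PQt : {in t, forall y, y != a -> P y = Q y}.
  by move=> y yt; apply: PQ; rewrite inE yt orbT.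
case: (eqVneq x a) => [xa|xa].
  subst x; rewrite (@eq_in_count _ P Q t); first lia.
  by move=> y yt; apply: PQt => //; apply: contraNneq xt => <-.
have -> : P x = Q x by apply: PQ; rewrite ?inE ?eqxx.
by rewrite -!addnA IH //; move: at'; rewrite eq_sym (negbTE xa).
Qed.

Lemma count_eq_off2 (a b : T) (P Q : pred T) : a \in s -> b \in s -> a != b ->
  {in s, forall x, x != a -> x != b -> P x = Q x} ->
  (count P s + Q a + Q b = count Q s + P a + P b)%N.
Proof.
move=> as' bs ab PQ; pose S x := if x == a then Q a else P x.
have PS : (count P s + S a = count S s + P a)%N.
  by apply: count_eq_off1 => // x _ xa; rewrite /S (negbTE xa).
have SQ : (count S s + Q b = count Q s + S b)%N.
  apply: count_eq_off1 => // x xs xb; rewrite /S.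
  by case: eqVneq => [->|xa] //; apply: PQ.
move: PS SQ; rewrite /S eqxx eq_sym (negbTE ab); lia.
Qed.

Lemma count_comp_perm (f : T -> T) (P : pred T) :
  {in s &, injective f} -> {in s, forall x, f x \in s} ->
  count P s = count (P \o f) s.
Proof.
move=> finj fs; have ufs : uniq (map f s) by rewrite map_inj_in_uniq.
have fss : {subset map f s <= s} by move=> y /mapP[x xs ->]; exact: fs.
have [_ fsE] := uniq_min_size ufs fss (eq_leq (esym (size_map f s))).
have /permP -> : perm_eq s (map f s) by rewrite uniq_perm // => x; rewrite fsE.
by rewrite count_map.
Qed.

Lemma count_inj_le (f : T -> T) (A B : pred T) :
  {in filter A s &, injective f} ->
  {in s, forall x, A x -> f x \in s /\ B (f x)} ->
  (count A s <= count B s)%N.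
Proof.
move=> finj fAB; rewrite -!size_filter -(size_map f).
apply: uniq_leq_size; first by rewrite map_inj_in_uniq // filter_uniq.
move=> y /mapP[x]; rewrite mem_filter => /andP[Ax xs] ->.
by have [fxs fxB] := fAB x xs Ax; rewrite mem_filter fxB.
Qed.

End Counting.

Lemma subset_cons (T : eqType) (a : T) (s t : seq T) :
  {subset a :: s <= t} <-> a \in t /\ {subset s <= t}.
Proof.
split=> [st | [ta st] x]; last by rewrite inE => /orP[/eqP -> | /st].
by split=> [|x xs]; apply: st; rewrite inE ?eqxx ?xs ?orbT.
Qed.

Section Roots.
Variables (R : realType) (n : nat) (Phi Delta : seq 'cV[R]_n).
Notation V := 'cV[R]_n.
Hypothesis HPhi : root_system Phi.
Hypothesis HDelta : is_base Phi Delta.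
Notation pos := (posroot Phi Delta).
Notation neg := (negroot Phi Delta).
Notation m := (size Delta).

Lemma roots_uniq : uniq Phi. Proof. by case: HPhi => -[]. Qed.

Lemma root_neq0 a : a \in Phi -> a != 0.
Proof. by case: HPhi => -[_ Phi0] _ _ _ _; apply: contraTneq => ->. Qed.

Lemma refl_root a b : a \in Phi -> b \in Phi -> refl a *m b \in Phi.
Proof. by case: HPhi => _ _ _ + _; apply. Qed.

Lemma rootN a : a \in Phi -> - a \in Phi.
Proof. by move=> Ha; rewrite -refl_self ?root_neq0 ?refl_root. Qed.

Lemma root_reduced a c : a \in Phi -> c *: a \in Phi -> c = 1 \/ c = -1.
Proof. by case: HPhi => _ _ red _ _ /red; apply. Qed.

Lemma base_roots : {subset Delta <= Phi}. Proof. by case: HDelta. Qed.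

Lemma base_coord_inj (c d : nat -> R) :
  \sum_(i < m) c i *: Delta`_i = \sum_(i < m) d i *: Delta`_i ->
  forall i, (i < m)%N -> c i = d i.
Proof.
case: HDelta => _ free _ cd i im; apply/eqP; rewrite -subr_eq0; apply/eqP.
apply: (free (fun i => c i - d i)) => //.
by under eq_bigr do rewrite scalerBl; rewrite sumrB cd subrr.
Qed.

Lemma scale_base_sum (r : R) j : (j < m)%N ->
  r *: Delta`_j = \sum_(i < m) (if (i : nat) == j then r else 0) *: Delta`_i.
Proof.
move=> jm; rewrite (bigD1 (Ordinal jm)) //= eqxx big1 ?addr0 // => i.
by rewrite -val_eqE /= => /negbTE ->; rewrite scale0r.
Qed.

Definition cone (x : V) := exists2 c : nat -> R,
  forall i, 0 <= c i & x = \sum_(i < m) c i *: Delta`_i.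

Lemma coneD x y : cone x -> cone y -> cone (x + y).
Proof.
move=> [c c0 ->] [d d0 ->]; exists (fun i => c i + d i) => [i|].
  by rewrite addr_ge0.
by rewrite -big_split /=; apply: eq_bigr => i _; rewrite scalerDl.
Qed.

Lemma coneZ r x : 0 <= r -> cone x -> cone (r *: x).
Proof.
move=> r0 [c c0 ->]; exists (fun i => r * c i) => [i|].
  by rewrite mulr_ge0.
by rewrite scaler_sumr; apply: eq_bigr => i _; rewrite scalerA.
Qed.

Lemma cone_anti x : cone x -> cone (- x) -> x = 0.
Proof.
move=> [c c0 Ex] [d d0 Enx].
have cd0 : \sum_(i < m) (c i + d i) *: Delta`_i = 0.
  by under eq_bigr do rewrite scalerDl; rewrite big_split /= -Ex -Enx subrr.
rewrite Ex big1 // => i _.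
have /eqP : c i + d i = 0.
  apply: (@base_coord_inj (fun i => c i + d i) (fun=> 0)) => //.
  by rewrite cd0 big1 // => j _; rewrite scale0r.
by rewrite paddr_eq0 // => /andP[/eqP -> _]; rewrite scale0r.
Qed.

Lemma pos_cone x : pos x -> cone x.
Proof. by move=> [_ [c ->]]; exists (fun i => (c i)%:R). Qed.

Lemma pos_root x : pos x -> x \in Phi. Proof. by case. Qed.

Lemma negN x : neg (- x) <-> pos x.
Proof. by rewrite /negroot opprK. Qed.

Lemma pos_or_neg x : x \in Phi -> pos x \/ neg x.
Proof.
move=> xPhi; case: HDelta => _ _ /(_ x xPhi) [] cx; [left | right] => //.
by split; rewrite ?rootN.
Qed.

Lemma pos_neg x : pos x -> neg x -> False.
Proof.
move=> px nx; have := root_neq0 (pos_root px).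
by rewrite (cone_anti (pos_cone px) (pos_cone nx)) eqxx.
Qed.

Lemma cone_pos x : x \in Phi -> cone x -> pos x.
Proof.
move=> xPhi cx; case: (pos_or_neg xPhi) => // nx.
by have := root_neq0 xPhi; rewrite (cone_anti cx (pos_cone nx)) eqxx.
Qed.

Lemma simple_pos a : a \in Delta -> pos a.
Proof.
move=> aD; split; first exact: base_roots.
exists (fun i => nat_of_bool (i == index a Delta)).
rewrite -[a in LHS]scale1r -{1}(nth_index 0 aD) scale_base_sum ?index_mem //.
by apply: eq_bigr => i _; case: eqP.
Qed.

(* If s_a b = b - k a were negative, the coordinates of b would all vanish
   except the one at a, and reducedness would force b = a. *)
Lemma refl_simple_pos a b : a \in Delta -> pos b -> b != a ->
  pos (refl a *m b).
Proof.
move=> aD bpos ba; have aPhi := base_roots aD.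
case: (pos_or_neg (refl_root aPhi (pos_root bpos))) => // -[_ [d Ed]].
have [c Ec] := bpos.2; set j := index a Delta.
have jm : (j < m)%N by rewrite index_mem.
have Daj : Delta`_j = a by rewrite nth_index.
set k := 2 / dot a a * dot a b.
have cdk : \sum_(i < m) ((c i)%:R + (d i)%:R) *: Delta`_i =
           \sum_(i < m) (if (i : nat) == j then k else 0) *: Delta`_i.
  under eq_bigr do rewrite scalerDl.
  rewrite -scale_base_sum // Daj big_split /= -Ec -Ed mul_refl.
  by rewrite opprB addrCA subrr addr0.
have c0 i : (i < m)%N -> i != j -> c i = 0%N.
  move=> im ij; have /eqP := @base_coord_inj (fun i => (c i)%:R + (d i)%:R)
    (fun i => if i == j then k else 0) cdk i im.
  by rewrite (negbTE ij) -natrD pnatr_eq0 addn_eq0 => /andP[/eqP].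
have Eb : b = (c j)%:R *: a.
  rewrite Ec (bigD1 (Ordinal jm)) //= Daj big1 ?addr0 // => i.
  by rewrite -val_eqE /= => ij; rewrite c0 // scale0r.
have cjPhi : (c j)%:R *: a \in Phi by rewrite -Eb; exact: pos_root.
have [c1|cN1] := root_reduced aPhi cjPhi.
  by move: ba; rewrite Eb c1 scale1r eqxx.
by have : (0 : R) <= (c j)%:R by []; rewrite cN1; lra.
Qed.

Lemma in_W_orthomx w : in_W Phi w -> orthomx w.
Proof.
elim=> [|a M aPhi _ oM]; first by rewrite /orthomx trmx1 mulmx1.
by apply: orthomxM => //; apply/orthomx_refl/root_neq0.
Qed.

Lemma in_W_inv w : in_W Phi w -> invmx w = w^T.
Proof. by move/in_W_orthomx/orthomx_inv. Qed.

Lemma in_W_root w b : in_W Phi w -> b \in Phi -> w *m b \in Phi.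
Proof.
move=> wW; elim: wW b => [|a M aPhi _ IH] b bPhi; first by rewrite mul1mx.
by rewrite -mulmxA refl_root ?IH.
Qed.

Lemma in_W_mulr w a : in_W Phi w -> a \in Phi -> in_W Phi (w *m refl a).
Proof.
move=> wW aPhi; elim: wW => [|b M bPhi _ IH]; last by rewrite -mulmxA; apply: W_refl.
by rewrite mul1mx -[refl a]mulmx1; apply: W_refl aPhi (W_one _).
Qed.

Lemma in_W_tr w : in_W Phi w -> in_W Phi w^T.
Proof.
elim=> [|a M aPhi _ IH]; first by rewrite trmx1; constructor.
by rewrite trmx_mul tr_refl; apply: in_W_mulr.
Qed.

Definition refl_prod (s : seq V) := foldr (fun a M => refl a *m M) 1%:M s.

Lemma refl_prod_cat s t : refl_prod (s ++ t) = refl_prod s *m refl_prod t.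
Proof. by elim: s => [|a s IH] /=; rewrite ?mul1mx // IH mulmxA. Qed.

Lemma tr_refl_prod s : (refl_prod s)^T = refl_prod (rev s).
Proof.
elim: s => [|a s IH] /=; first by rewrite trmx1.
by rewrite trmx_mul IH tr_refl rev_cons -cats1 refl_prod_cat /= mulmx1.
Qed.

Lemma refl_prod_in_W s : {subset s <= Delta} -> in_W Phi (refl_prod s).
Proof.
elim: s => [|a s IH] /=; first by move=> _; exact: W_one.
by move=> /subset_cons[aD sD]; apply: W_refl; [exact: base_roots | exact: IH].
Qed.

Definition ninv (w : 'M[R]_n) := count (fun b => pb (N_set Phi Delta w b)) Phi.

Lemma N_setE w b : in_W Phi w -> N_set Phi Delta w b <-> pos b /\ neg (w^T *m b).
Proof. by move=> wW; rewrite /N_set in_W_inv. Qed.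

Lemma ninv1 : ninv 1%:M = 0%N.
Proof.
apply/eqP; rewrite -leqn0 leqNgt -has_count; apply/hasP => -[b _].
move/pbP; rewrite N_setE; last exact: W_one.
by rewrite trmx1 mul1mx => -[]; exact: pos_neg.
Qed.

Lemma refl_simple_posE a b : a \in Delta -> b != a -> b != - a ->
  pos (refl a *m b) <-> pos b.
Proof.
move=> aD ba bNa; have a0 := root_neq0 (base_roots aD).
split=> [fbpos|bpos]; last exact: refl_simple_pos.
rewrite -(mul_reflK b a0); apply: refl_simple_pos => //.
by apply: contraNneq bNa => fba; rewrite -(mul_reflK b a0) fba refl_self.
Qed.

(* s_a permutes Phi, exchanges a and -a, and preserves positivity elsewhere;
   so only the roots a and -a can change membership between N_M and N_(s_a M). *)
Lemma ninv_refl_simple a M : a \in Delta -> in_W Phi M ->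
  (ninv (refl a *m M) + pb (N_set Phi Delta M a) =
   ninv M + pb (pos (M^T *m a)))%N.
Proof.
move=> aD MW; have aPhi := base_roots aD; have a0 := root_neq0 aPhi.
have apos := simple_pos aD; have aMW : in_W Phi (refl a *m M) by apply: W_refl.
pose f (b : V) := refl a *m b.
have aNa : a != - a.
  apply/eqP => /(congr1 (fun x => a + x)); rewrite subrr -mulr2n -scaler_nat.
  by move/eqP; rewrite scaler_eq0 pnatr_eq0 (negbTE a0).
rewrite /ninv (@count_comp_perm _ _ roots_uniq f); first last.
- by move=> b; exact: refl_root.
- by move=> x y _ _ /(congr1 f); rewrite /f !mul_reflK.
set P := (_ \o f); set Q := (fun b => _).
have PE b : P b = pb (pos (f b) /\ neg (M^T *m b)).
  by apply: pb_eq; rewrite N_setE // trmx_mul tr_refl -mulmxA mul_reflK.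
have Qa : Q (- a) = false.
  by apply/pbP; rewrite N_setE // => -[/(pos_neg apos)].
have Pa : P a = false.
  by rewrite PE; apply/pbP; rewrite /f refl_self // => -[/(pos_neg apos)].
have PNa : P (- a) = pb (pos (M^T *m a)).
  rewrite PE; apply: pb_eq; rewrite /f mulmxN refl_self // opprK mulmxN negN.
  by split=> [[]|].
have := count_eq_off2 roots_uniq aPhi (rootN aPhi) aNa (P := P) (Q := Q).
rewrite Qa Pa PNa addn0 => ->; first by rewrite addn0.
by move=> x _ xa xNa; rewrite PE; apply: pb_eq; rewrite N_setE // refl_simple_posE.
Qed.

Lemma ninv_refl_prod_le s : {subset s <= Delta} -> (ninv (refl_prod s) <= size s)%N.
Proof.
elim: s => [|a s IH] /=; first by rewrite ninv1.
move=> /subset_cons[aD sD]; have := ninv_refl_simple aD (refl_prod_in_W sD).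
by have := IH sD; case: (pb (N_set _ _ _ _)); case: (pb (pos _)) => /=; lia.
Qed.

Lemma strong_exchange s b : {subset s <= Delta} -> pos b ->
  neg ((refl_prod s)^T *m b) ->
  exists2 t, {subset t <= Delta} /\ (size t < size s)%N &
             refl b *m refl_prod s = refl_prod t.
Proof.
elim: s b => [|a s IH] b /=.
  by move=> _ bpos; rewrite trmx1 mul1mx => /(pos_neg bpos).
move=> /subset_cons[aD sD] bpos; have a0 := root_neq0 (base_roots aD).
case: (eqVneq b a) => [-> _ | ba]; first by exists s; rewrite // mulmxA reflK ?mul1mx.
rewrite trmx_mul tr_refl -mulmxA => /(IH _ sD (refl_simple_pos aD bpos ba)).
case=> t [tD st] Et; exists (a :: t); first by rewrite subset_cons.
by rewrite /= -Et -(refl_conj _ (orthomx_refl a0)) tr_refl !mulmxA reflK ?mul1mx.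
Qed.

Lemma refl_prod_reduce s : {subset s <= Delta} -> (ninv (refl_prod s) < size s)%N ->
  exists2 t, {subset t <= Delta} /\ (size t < size s)%N & refl_prod t = refl_prod s.
Proof.
elim: s => [|a s IH] //= /subset_cons[aD sD] ninv_lt.
have sW := refl_prod_in_W sD.
case: (ltnP (ninv (refl_prod s)) (size s)) => [/(IH sD)[t [tD st] Et] | ninv_s].
  by exists (a :: t); rewrite /= ?Et // subset_cons.
have [Mapos | Maneg] := pos_or_neg (in_W_root (in_W_tr sW) (base_roots aD)).
  have := ninv_refl_simple aD sW.
  have -> : pb (pos ((refl_prod s)^T *m a)) = true by apply/pbP.
  have -> : pb (N_set Phi Delta (refl_prod s) a) = false.
    by apply/pbP; rewrite N_setE // => -[_ /(pos_neg Mapos)].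
  by rewrite addn0 addn1 => E; move: ninv_lt; rewrite E ltnS ltnNge ninv_s.
have [t [tD ts] Et] := strong_exchange sD (simple_pos aD) Maneg.
by exists t => //; split; last exact: ltnW.
Qed.

Lemma cox_length_ninv w k : cox_length Delta w k -> k = ninv w.
Proof.
move=> [[s [<- sD ->]] kmin]; apply/eqP; rewrite eqn_leq ninv_refl_prod_le // andbT.
rewrite leqNgt; apply/negP => /(refl_prod_reduce sD)[t [tD ts] Et].
by have := kmin (size t) (ex_intro _ t (And3 erefl tD (esym Et))); rewrite leqNgt ts.
Qed.

Definition simple_prod (w : 'M[R]_n) :=
  exists2 s, {subset s <= Delta} & w = refl_prod s.

Lemma simple_prod_cox_length w : simple_prod w -> cox_length Delta w (ninv w).
Proof.
move=> [s sD ->].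
pose P k := pb (simple_word Delta (refl_prod s) k).
have [|k /pbP wk kmin] := ex_minnP (P := P).
  by exists (size s); apply/pbP; exists s.
suff wlen : cox_length Delta (refl_prod s) k by rewrite -(cox_length_ninv wlen).
by split=> // k' /pbP; apply: kmin.
Qed.

Lemma simple_prod1 : simple_prod 1%:M. Proof. by exists [::]. Qed.

Lemma simple_prodM u w : simple_prod u -> simple_prod w -> simple_prod (u *m w).
Proof.
move=> [s sD ->] [t tD ->]; exists (s ++ t); last by rewrite refl_prod_cat.
by move=> x; rewrite mem_cat => /orP[/sD | /tD].
Qed.

Lemma simple_prod_tr w : simple_prod w -> simple_prod w^T.
Proof.
move=> [s sD ->]; exists (rev s); last by rewrite tr_refl_prod.
by move=> x; rewrite mem_rev => /sD.
Qed.

Lemma simple_prod_simple a : a \in Delta -> simple_prod (refl a).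
Proof.
by move=> aD; exists [:: a]; rewrite /= ?mulmx1 // => x; rewrite inE => /eqP ->.
Qed.

Lemma exists_simple_dot_pos b : pos b -> exists2 a, a \in Delta & 0 < dot a b.
Proof.
move=> bpos; have [c Ec] := bpos.2.
case: (boolP [exists i : 'I_m, 0 < dot Delta`_i b]) => [/existsP[i] | /existsPn Hle].
  by exists Delta`_i; rewrite ?mem_nth.
have : \sum_(i < m) dot ((c i)%:R *: Delta`_i) b <= 0.
  by apply: sumr_le0 => i _; rewrite dotZl mulr_ge0_le0 // leNgt Hle.
rewrite -dot_suml -Ec => /(lt_le_trans (dot_gt0 (root_neq0 (pos_root bpos)))).
by rewrite ltxx.
Qed.

(* The coordinate of a drops by 2(a,b)/(a,a) > 0, all others are unchanged. *)
Lemma refl_simple_height a b (c d : nat -> nat) : a \in Delta -> 0 < dot a b ->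
  b = \sum_(i < m) (c i)%:R *: Delta`_i ->
  refl a *m b = \sum_(i < m) (d i)%:R *: Delta`_i ->
  (\sum_(i < m) d i < \sum_(i < m) c i)%N.
Proof.
move=> aD ab Ec Ed; set j := index a Delta; have jm : (j < m)%N by rewrite index_mem.
set k := 2 / dot a a * dot a b.
have k0 : 0 < k by rewrite mulr_gt0 // divr_gt0 // dot_gt0 // root_neq0 ?base_roots.
have dkc : \sum_(i < m) ((d i)%:R + (if (i : nat) == j then k else 0)) *: Delta`_i
           = \sum_(i < m) (c i)%:R *: Delta`_i.
  under eq_bigr do rewrite scalerDl.
  by rewrite big_split /= -Ed -scale_base_sum // nth_index // -Ec mul_refl subrK.
rewrite -(ltr_nat R) !natr_sum.
have cE := @base_coord_inj (fun i => (d i)%:R + (if i == j then k else 0))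
  (fun i => (c i)%:R) dkc.
under [X in _ < X]eq_bigr => i _ do rewrite -(cE i (ltn_ord i)).
rewrite big_split /= ltrDl (bigD1 (Ordinal jm)) //= eqxx big1 ?addr0 // => i.
by rewrite -val_eqE /= => /negbTE ->.
Qed.

(* s_b = s_a s_(s_a b) s_a, and s_a b is a positive root of smaller height. *)
Lemma refl_pos_conj_simple b : pos b ->
  exists u a, [/\ simple_prod u, a \in Delta & refl b = u *m refl a *m u^T].
Proof.
move=> bpos; have [c Ec] := bpos.2.
move Eh : (\sum_(i < m) c i) => h.
elim/ltn_ind: h b c bpos Ec Eh => h IH b c bpos Ec Eh.
case: (boolP (b \in Delta)) => bD.
  by exists 1%:M, b; rewrite mul1mx trmx1 mulmx1; split; first exact: simple_prod1.
have [a aD ab] := exists_simple_dot_pos bpos; have a0 := root_neq0 (base_roots aD).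
have ba : b != a by apply: contraNneq bD => ->.
have b'pos := refl_simple_pos aD bpos ba; have [d Ed] := b'pos.2.
have dh : (\sum_(i < m) d i < h)%N by rewrite -Eh (refl_simple_height aD ab Ec Ed).
have [u [a' [uS a'D Eu]]] := IH _ dh _ d b'pos Ed erefl.
exists (refl a *m u), a'; split => //; first exact/simple_prodM/uS/simple_prod_simple.
rewrite -[b](mul_reflK b a0) -(refl_conj _ (orthomx_refl a0)) Eu tr_refl.
by rewrite trmx_mul tr_refl !mulmxA.
Qed.

Lemma refl_simple_prod a : a \in Phi -> simple_prod (refl a).
Proof.
have posS b : pos b -> simple_prod (refl b).
  move=> /refl_pos_conj_simple[u [a' [uS a'D ->]]]; apply: simple_prodM.
    by apply: simple_prodM => //; exact: simple_prod_simple.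
  exact: simple_prod_tr.
by move=> /pos_or_neg[/posS // | /posS]; rewrite reflN.
Qed.

Lemma in_W_simple_prod w : in_W Phi w -> simple_prod w.
Proof.
elim=> [|a M aPhi _ MS]; first exact: simple_prod1.
by apply: simple_prodM => //; exact: refl_simple_prod.
Qed.

Lemma refl_coef_ge0 a b : pos a -> pos b -> neg (refl a *m b) ->
  0 <= 2 / dot a a * dot a b.
Proof.
move=> apos bpos fbneg; set k := 2 / dot a a * dot a b.
rewrite leNgt; apply/negP => k_lt0; have := root_neq0 (pos_root apos).
have kaE : k *: a = b + - (refl a *m b) by rewrite mul_refl opprB addrC subrK.
have cka : cone (k *: a) by rewrite kaE; apply: coneD; exact: pos_cone.
have ckaN : cone (- (k *: a)).
  by rewrite -scaleNr; apply: coneZ; [rewrite oppr_ge0 ltW | exact: pos_cone].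
move/eqP: (cone_anti cka ckaN); rewrite scaler_eq0 => /orP[/eqP k0 | -> //].
by move: k_lt0; rewrite k0 ltxx.
Qed.

Section BruhatEdge.
Variables (u : 'M[R]_n) (a : V).
Hypotheses (uW : in_W Phi u) (apos : pos a) (uapos : pos (u^T *m a)).
Let a0 : a != 0 := root_neq0 (pos_root apos).
Let vW : in_W Phi (refl a *m u) := W_refl (pos_root apos) uW.

Lemma N_set_edge b : N_set Phi Delta (refl a *m u) b <->
  pos b /\ neg (u^T *m (refl a *m b)).
Proof.
by rewrite N_setE // trmx_mul tr_refl mulmxA.
Qed.

Definition edge_map b := if pb (pos (refl a *m b)) then refl a *m b else b.

(* When s_a b is negative, s_a b = b - k a with k >= 0, so
   u^T (s_a b) = u^T b - k u^T a is still negative. *)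
Lemma edge_map_N_set b : N_set Phi Delta u b ->
  N_set Phi Delta (refl a *m u) (edge_map b) /\ edge_map b != a.
Proof.
rewrite N_setE // N_set_edge => -[bpos ubneg]; rewrite /edge_map.
case: pbP => [fbpos | fbnpos].
  split; first by rewrite mul_reflK.
  apply: contraTneq isT => /(congr1 (mulmx (refl a))).
  rewrite mul_reflK // refl_self // => bE.
  by case: (pos_neg apos); rewrite /negroot -bE.
split; last by apply: contraTneq isT => bE; case: (pos_neg uapos); rewrite -bE.
have fbPhi := refl_root (pos_root apos) (pos_root bpos).
split=> //; apply: cone_pos; first by apply/rootN/in_W_root => //; exact: in_W_tr.
have fbneg : neg (refl a *m b) by case: (pos_or_neg fbPhi).
rewrite mul_refl mulmxBr opprB -scalemxAr.
apply: coneD; last exact: pos_cone.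
by apply: coneZ; [exact: refl_coef_ge0 | exact: pos_cone].
Qed.

Lemma ninv_edge : (ninv u < ninv (refl a *m u))%N.
Proof.
set A := fun b => pb (N_set Phi Delta (refl a *m u) b).
have Aa : A a by apply/pbP; rewrite N_set_edge refl_self // mulmxN negN.
have := count_eq_off1 roots_uniq (pos_root apos) (P := predI A (predC1 a)) (Q := A).
rewrite /= eqxx andbF Aa addn0 /ninv -/A => <-; last by move=> x _ /= ->; rewrite andbT.
rewrite addn1 ltnS; apply: (count_inj_le roots_uniq (f := edge_map)).
  move=> b1 b2; rewrite !mem_filter.
  move=> /andP[/pbP/(N_setE _ uW)[b1pos _] _] /andP[/pbP/(N_setE _ uW)[b2pos _] _].
  rewrite /edge_map; case: pbP => p1; case: pbP => p2 E.
  - by rewrite -(mul_reflK b1 a0) E mul_reflK.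
  - by case: p2; rewrite -E mul_reflK.
  - by case: p1; rewrite E mul_reflK.
  - exact: E.
move=> b bPhi /pbP/edge_map_N_set[Nfb fba]; rewrite /= fba andbT; split; last exact/pbP.
exact: pos_root Nfb.1.
Qed.

End BruhatEdge.

Lemma bruhat_edge_ninv u v : in_W Phi u -> bruhat_edge Phi Delta u v ->
  in_W Phi v /\ (ninv u < ninv v)%N.
Proof.
move=> uW [a [apos -> vaneg]]; split; first exact: W_refl (pos_root apos) uW.
apply: ninv_edge => //; rewrite -negN -mulmxN -(refl_self (root_neq0 (pos_root apos))).
by rewrite mulmxA -tr_refl -trmx_mul -in_W_inv //; apply: W_refl (pos_root apos) uW.
Qed.

Lemma bruhat_path_ninv u v : in_W Phi u -> clos_trans _ (bruhat_edge Phi Delta) u v ->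
  in_W Phi v /\ (ninv u < ninv v)%N.
Proof.
move=> uW uv; elim: uv uW => [x y xy xW | x y z _ IHxy _ IHyz xW].
  exact: bruhat_edge_ninv.
have [yW xy] := IHxy xW; have [zW yz] := IHyz yW.
by split=> //; exact: ltn_trans xy yz.
Qed.

(* A Bruhat path of two or more edges raises ninv by at least two. *)
Lemma bruhat_path_edge u v : in_W Phi u -> clos_trans _ (bruhat_edge Phi Delta) u v ->
  ninv v = (ninv u).+1 -> bruhat_edge Phi Delta u v.
Proof.
move=> uW /clos_trans_t1n_iff uv.
case: uv => [// | y {}v uy /clos_trans_t1n_iff yv] Ev; exfalso.
have [yW /leq_ltn_trans uy'] := bruhat_edge_ninv uW uy.
by have [_ /uy'] := bruhat_path_ninv yW yv; rewrite Ev ltnn.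
Qed.

Lemma invmx_mul_eqN w (g b : V) : in_W Phi w -> (invmx w *m b = - g <-> b = - (w *m g)).
Proof.
move=> wW; have ow := in_W_orthomx wW.
rewrite in_W_inv //; split=> [/(congr1 (mulmx w)) | ->].
  by rewrite mulmxA orthomx_trV // mul1mx mulmxN.
by rewrite mulmxN mulmxA ow mul1mx.
Qed.

Lemma Ng_setE w (g b : V) : in_W Phi w ->
  Ng_set Phi Delta g w b <-> N_set Phi Delta w b /\ b != - (w *m g).
Proof.
move=> wW; rewrite /Ng_set /N_set /neg_hg.
have gE : (- (invmx w *m b) == g) = (b == - (w *m g)).
  by rewrite eqr_oppLR; apply/eqP/eqP => /(invmx_mul_eqN _ _ wW).
by rewrite gE; split=> [[? []] | [[? ?] ?]].
Qed.

Lemma ninv_ell_g w (g : V) : in_W Phi w -> g \in Phi ->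
  ninv w = (ell_g Phi Delta g w + pb (N_set Phi Delta w (- (w *m g))))%N.
Proof.
move=> wW gPhi; have wgPhi := rootN (in_W_root wW gPhi).
have := count_eq_off1 roots_uniq wgPhi
  (P := fun b => pb (Ng_set Phi Delta g w b)) (Q := fun b => pb (N_set Phi Delta w b)).
have -> : pb (Ng_set Phi Delta g w (- (w *m g))) = false.
  by apply/pbP; rewrite Ng_setE // eqxx => -[].
rewrite addn0 /ell_g /ninv => <- //.
by move=> b _ bwg; apply: pb_eq; rewrite Ng_setE // bwg; split=> [[]|].
Qed.

Lemma N_set_eq_Ng_set w (g : V) : in_W Phi w ->
  (forall b, N_set Phi Delta w b <-> Ng_set Phi Delta g w b) <->
  ~ N_set Phi Delta w (- (w *m g)).
Proof.
move=> wW; split=> [NNg /NNg | NwgN b]; first by rewrite Ng_setE // eqxx => -[].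
rewrite Ng_setE //; split=> [Nb | []] //; split=> //.
by apply: contra_notN NwgN => /eqP <-.
Qed.

Lemma exists_N_set_eqN w (g : V) : in_W Phi w ->
  (exists2 b, N_set Phi Delta w b & invmx w *m b = - g) <->
  N_set Phi Delta w (- (w *m g)).
Proof.
move=> wW; split=> [[b Nb /(invmx_mul_eqN _ _ wW) <-] // | Nwg].
by exists (- (w *m g)); last exact/invmx_mul_eqN.
Qed.

End Roots.

Theorem lemma3p1 (R : realType) (n : nat) (Phi Delta : seq 'cV[R]_n)
    (g : 'cV[R]_n) (v w : 'M[R]_n) :
  root_system Phi -> irreducible_rs Phi -> is_base Phi Delta ->
  highest_root Phi Delta g ->
  in_W Phi v -> in_W Phi w ->
  bruhat_lt Phi Delta w v ->
  (ell_g Phi Delta g w = ell_g Phi Delta g v <->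
   [/\ is_cover Phi Delta w v,
       (forall b, N_set Phi Delta w b <-> Ng_set Phi Delta g w b) &
       (exists2 b, N_set Phi Delta v b & invmx v *m b = - g)]).
Proof.
move=> HPhi _ HD [/pos_root gPhi _] vW wW [_ wv].
have [_ ninv_wv] := bruhat_path_ninv HPhi HD wW wv.
have Ew := ninv_ell_g Delta HPhi wW gPhi; have Ev := ninv_ell_g Delta HPhi vW gPhi.
split=> [ell_wv | [[_ [k [lw lv]]] /(N_set_eq_Ng_set Delta HPhi g wW) Nw]].
  move: Ew Ev ninv_wv; rewrite ell_wv.
  case: pbP => Nw; case: pbP => Nv /= Ew Ev ninv_wv; try by exfalso; lia.
  have ninv_v : ninv Phi Delta v = (ninv Phi Delta w).+1 by lia.
  split; last exact/(exists_N_set_eqN Delta HPhi g vW).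
    split; first exact: (bruhat_path_edge HPhi HD wW wv ninv_v).
    exists (ninv Phi Delta w); rewrite -ninv_v.
    by split; apply: (simple_prod_cox_length HPhi HD);
      exact: (in_W_simple_prod HPhi HD).
  exact/(N_set_eq_Ng_set Delta HPhi g wW).
move=> /(exists_N_set_eqN Delta HPhi g vW) Nv.
move: Ew Ev; rewrite -(cox_length_ninv HPhi HD lw) -(cox_length_ninv HPhi HD lv).
by do 2 case: pbP => //= _; lia.
Qed.
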